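(* Let $V$ be a finite set, let $d\ge 1$, let $R=(\le_1,\ldots,\le_d)$ be a $d$-representation on $V$, and let $R'=(\le_1,\ldots,\le_{d-1})$. For every $F\in\Sigma(R)\setminus\Sigma(R')$, the set $\{x\in V : x<_i \max_{\le_i}F \text{ for all } i\in\{1,\ldots,d-1\}\}$ is nonempty. Consequently the map $\psi:\Sigma(R)\setminus\Sigma(R')\to V$, $\psi(F)=\min_{\le_d}\{x\in V : x<_i\max_{\le_i}F \ \forall i\in\{1,\ldots,d-1\}\}$, is well-defined.
   Context: A $k$-representation on $V$ is a family of $k$ linear orders on $V$. For a linear order $\le$ on $V$, $x\in V$ and $F\subseteq V$, $x$ dominates $F$ in $\le$ if $f\le x$ for all $f\in F$; $x$ dominates $F$ in a representation if it dominates $F$ in at least one of its orders. For a representation $S$ on $V$, the supremum section $\Sigma(S)$ is the set of subsets $F\subseteq V$ such that every $v\in V$ dominates $F$ in $S$. When $d=1$, $R'$ has no orders and the same definition applies (the condition on $x$ is then vacuous). $<_i$ denotes the strict order associated with $\le_i$. *)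

From mathcomp Require Import all_boot all_order.
Set Implicit Arguments. Unset Strict Implicit. Unset Printing Implicit Defensive.

Section Defs.
Variable V : finType.

Definition linear_order (le : rel V) : Prop :=
  [/\ reflexive le, antisymmetric le, transitive le & total le].

Definition strict (le : rel V) (x y : V) : bool := le x y && (x != y).

Definition dominates_in (le : rel V) (x : V) (F : {set V}) : Prop :=
  forall f, f \in F -> le f x.

(* A k-representation is the family of orders R 0, ..., R (k-1).
   x dominates F in the representation if it dominates F in at least one order. *)
Definition dominates (k : nat) (R : nat -> rel V) (x : V) (F : {set V}) : Prop :=
  exists i, i < k /\ dominates_in (R i) x F.

Definition sup_section (k : nat) (R : nat -> rel V) (F : {set V}) : Prop :=
  forall v : V, dominates k R v F.

Definition is_max (le : rel V) (F : {set V}) (m : V) : Prop :=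
  m \in F /\ dominates_in le m F.

Definition below_maxes (k : nat) (R : nat -> rel V) (F : {set V}) (x : V) : Prop :=
  forall i, i < k -> forall m, is_max (R i) F m -> strict (R i) x m.

End Defs.

From mathcomp Require Import all_boot all_order.
From Stdlib Require Import Classical ClassicalEpsilon.

Set Implicit Arguments.
Unset Strict Implicit.
Unset Printing Implicit Defensive.

(* Since F is not in Sigma(R'), some vertex v dominates F in none of the
   orders <=_1, ..., <=_{d-1}.  In a linear order, failing to dominate F means
   lying strictly below max F, so v witnesses nonemptiness; the minimum in the
   linear order <=_d of a nonempty subset of a finite set exists and is unique. *)

Section LinearOrders.
Variable V : finType.

Lemma linear_order_set_min (le : rel V) (A : {set V}) :
  linear_order le -> A != set0 ->
  exists2 x, x \in A & forall y, y \in A -> le x y.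
Proof.
move=> [le_refl _ le_trans le_total] /set0Pn[a aA].
have sorted_A := sort_sorted le_total (enum A).
have mem_sortA y : (y \in sort le (enum A)) = (y \in A) by rewrite mem_sort mem_enum.
case: (sort le (enum A)) sorted_A mem_sortA => [|x s] /= path_s mem_s.
  by move: (mem_s a); rewrite aA in_nil.
exists x; first by rewrite -mem_s mem_head.
move=> y; rewrite -mem_s in_cons => /predU1P[-> //|ys].
exact: (allP (order_path_min le_trans path_s)).
Qed.

Lemma linear_order_exists_unique_min (le : rel V) (P : V -> Prop) :
  linear_order le -> (exists x, P x) ->
  exists! x, P x /\ forall y, P y -> le x y.
Proof.
move=> le_lin [a Pa].
pose decP x := if excluded_middle_informative (P x) then true else false.
have decPP x : reflect (P x) (decP x).
  by rewrite /decP; case: excluded_middle_informative => h; constructor.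
have /(linear_order_set_min le_lin)[x] : [set x | decP x] != set0.
  by apply/set0Pn; exists a; rewrite inE; apply/decPP.
rewrite inE => /decPP Px x_min.
have {}x_min y : P y -> le x y by move=> Py; apply: x_min; rewrite inE; apply/decPP.
exists x; split=> [//|x' [Px' x'_min]].
by case: le_lin => _ le_anti _ _; apply: le_anti; rewrite x_min ?x'_min.
Qed.

Lemma strict_max_of_not_dominates_in (le : rel V) (F : {set V}) (x m : V) :
  linear_order le -> ~ dominates_in le x F -> is_max le F m -> strict le x m.
Proof.
move=> [_ _ le_trans le_total] x_ndom [_ m_max].
have [f [fF f_nle_x]] : exists f, f \in F /\ ~~ le f x.
  apply: NNPP => no_f; apply: x_ndom => f fF.
  by apply: NNPP => f_nle_x; apply: no_f; exists f; split=> //; apply/negP.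
have x_le_f : le x f by case/orP: (le_total x f) => // f_le_x; rewrite f_le_x in f_nle_x.
rewrite /strict (le_trans _ _ _ x_le_f (m_max f fF)) /=.
by apply: contraNneq f_nle_x => ->; apply: m_max.
Qed.

Lemma below_maxes_of_not_sup_section (k : nat) (R : nat -> rel V) (F : {set V}) :
  (forall i, i < k -> linear_order (R i)) -> ~ sup_section k R F ->
  exists x, below_maxes k R F x.
Proof.
move=> R_lin /not_all_ex_not[x x_ndom]; exists x => i ltik m m_max.
apply: strict_max_of_not_dominates_in m_max; first exact: R_lin.
by move=> x_dom; apply: x_ndom; exists i.
Qed.

End LinearOrders.

Theorem lemma2 (V : finType) (d : nat) (R : nat -> rel V) :
  1 <= d ->
  (forall i, i < d -> linear_order (R i)) ->
  forall F : {set V},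
    sup_section d R F -> ~ sup_section d.-1 R F ->
    (exists x, below_maxes d.-1 R F x) /\
    (exists! x, below_maxes d.-1 R F x /\
                forall y, below_maxes d.-1 R F y -> R d.-1 x y).
Proof.
move=> d_gt0 R_lin F _ F_nsup'.
have R'_lin i : i < d.-1 -> linear_order (R i).
  by move=> ltid; apply: R_lin; rewrite (leq_trans ltid) ?leq_pred.
have below_ex := below_maxes_of_not_sup_section R'_lin F_nsup'.
split=> //; apply: linear_order_exists_unique_min below_ex.
by apply: R_lin; rewrite prednK.
Qed.
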